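(* Let $a>1$, $k\in\mathbb{N}$, $C_j(n,a)=\binom{n}{j}\left(\frac{1+a}{2}\right)^{n-j}\left(\frac{1-a}{2}\right)^j$, $b_j=-\frac{i}{\sqrt2}(1-\frac{2j}{n})$, $b=-\frac{ia}{\sqrt2}$ and $e_k(z)=z^k/\sqrt{k!}$. Then for every $z\in\mathbb{C}$, $$\lim_{n\to\infty}\sum_{j=0}^nC_j(n,a)\mathcal{W}_{b_j}[e_k](z)=\mathcal{W}_b[e_k](z).$$
   Context: For $c\in\mathbb{C}$ the Weyl operator on the Fock space is $\mathcal{W}_cf(z)=f(z-c)e^{z\bar c-|c|^2/2}$. *)

From Stdlib Require Import Reals.
From Coquelicot Require Import Coquelicot.
Open Scope R_scope.

Definition Cexp (z : Complex.C) : Complex.C :=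
  (exp (Re z) * cos (Im z), exp (Re z) * sin (Im z)).

Definition Weyl (c : Complex.C) (f : Complex.C -> Complex.C) (z : Complex.C)
  : Complex.C :=
  Cmult (f (Cminus z c))
        (Cexp (Cminus (Cmult z (Cconj c)) (RtoC ((Cmod c) ^ 2 / 2)))).

Definition e_k (k : nat) (z : Complex.C) : Complex.C :=
  Cdiv (pow_n z k) (RtoC (sqrt (INR (Factorial.fact k)))).

Definition Ccoef (n j : nat) (a : R) : R :=
  Binomial.C n j * ((1 + a) / 2) ^ (n - j) * ((1 - a) / 2) ^ j.

Definition bj (n j : nat) : Complex.C :=
  (0, - (1 - 2 * INR j / INR n) / sqrt 2).

Definition bval (a : R) : Complex.C := (0, - a / sqrt 2).

(* With s_j = 1 - 2j/n, the sum [sum_j C_j(n,a) f(s_j)] is the "expectation" of f(X_n/n)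
   for a walk X_n whose steps +1 and -1 carry the signed weights (1+a)/2 and (1-a)/2.  Its
   e-th moment lies between a^e (1 - e/n)^e and a^e, hence tends to a^e.  If every s^e h(s)
   behaves like this with bound a^e K, then h may be multiplied by any entire power series:
   the series of bounds converges, so Tannery's theorem lets the limit n -> oo pass through
   the series.  Starting from 1 and multiplying by s, exp(lam s^L), cos and sin one reaches
   the real and imaginary parts of
     s |-> W_{-is/sqrt 2}[e_k](z) = (z + is/sqrt 2)^k exp(isz/sqrt 2 - s^2/4) / sqrt(k!),
   whose value at s = a is the right-hand side. *)

From Stdlib Require Import Reals Lra Lia Arith.
From Coquelicot Require Import Coquelicot.
Open Scope R_scope.

Lemma binomial_C_nonneg (n k : nat) : 0 <= Binomial.C n k.
Proof.
  unfold Binomial.C. apply Rmult_le_pos; [left; apply INR_fact_lt_0|].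
  left; apply Rinv_0_lt_compat, Rmult_lt_0_compat; apply INR_fact_lt_0.
Qed.

Lemma binomial_C_succ_pred (e : nat) : Binomial.C (S e) e = INR (S e).
Proof.
  unfold Binomial.C. replace (S e - e)%nat with 1%nat by lia.
  change (Factorial.fact (S e)) with (S e * Factorial.fact e)%nat.
  rewrite mult_INR. simpl (INR (Factorial.fact 1)).
  field. apply Rgt_not_eq, INR_fact_lt_0.
Qed.

Lemma sum_binomial_succ (n : nat) (h : nat -> R) :
  sum_f_R0 (fun j => Binomial.C (S n) j * h j) (S n) =
  sum_f_R0 (fun j => Binomial.C n j * h j) n
  + sum_f_R0 (fun j => Binomial.C n j * h (S j)) n.
Proof.
  destruct n as [|m].
  - simpl. rewrite (C_n_0 1), (C_n_n 1), (C_n_0 0). ring.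
  - rewrite (decomp_sum _ (S (S m))), (decomp_sum (fun j => Binomial.C (S m) j * h j) (S m))
      by lia.
    simpl pred. rewrite tech5, (tech5 (fun j => Binomial.C (S m) j * h (S j)) m).
    rewrite (sum_eq (fun i => Binomial.C (S (S m)) (S i) * h (S i))
               (fun i => Binomial.C (S m) i * h (S i) + Binomial.C (S m) (S i) * h (S i))).
    + rewrite plus_sum, !C_n_0, !C_n_n. ring.
    + intros i Hi. rewrite <- pascal by lia. ring.
Qed.

Definition p_up (a : R) : R := (1 + a) / 2.
Definition p_down (a : R) : R := (1 - a) / 2.

Definition walk_mean (a : R) (n : nat) (f : R -> R) : R :=
  sum_f_R0 (fun j => Binomial.C n j * p_up a ^ (n - j) * p_down a ^ j
                     * f (INR n - 2 * INR j)) n.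

Section WalkMean.

Variable a : R.

Lemma walk_mean_ext n f g : (forall x, f x = g x) -> walk_mean a n f = walk_mean a n g.
Proof. intros H. apply sum_eq. intros i _. rewrite H. reflexivity. Qed.

Lemma walk_mean_0 f : walk_mean a 0 f = f 0.
Proof. unfold walk_mean. simpl. rewrite C_n_0. replace (0 - 2 * 0) with 0 by ring. ring. Qed.

Lemma walk_mean_succ n f :
  walk_mean a (S n) f = walk_mean a n (fun x => p_up a * f (x + 1) + p_down a * f (x - 1)).
Proof.
  unfold walk_mean.
  set (h := fun j => p_up a ^ (S n - j) * p_down a ^ j * f (INR (S n) - 2 * INR j)).
  rewrite (sum_eq _ (fun j => Binomial.C (S n) j * h j)) by (intros i _; unfold h; ring).
  rewrite sum_binomial_succ, <- plus_sum. apply sum_eq. intros j Hj. unfold h.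
  replace (S n - j)%nat with (S (n - j)) by lia.
  replace (S n - S j)%nat with (n - j)%nat by lia.
  replace (INR (S n) - 2 * INR j) with (INR n - 2 * INR j + 1) by (rewrite S_INR; ring).
  replace (INR (S n) - 2 * INR (S j)) with (INR n - 2 * INR j - 1) by (rewrite !S_INR; ring).
  simpl. ring.
Qed.

Lemma walk_mean_scal n c f : walk_mean a n (fun x => c * f x) = c * walk_mean a n f.
Proof. unfold walk_mean. rewrite scal_sum. apply sum_eq. intros; ring. Qed.

Lemma walk_mean_sum n (g : nat -> R -> R) e :
  walk_mean a n (fun x => sum_f_R0 (fun i => g i x) e) = sum_f_R0 (fun i => walk_mean a n (g i)) e.
Proof.
  induction e as [|e IH]; [reflexivity|].
  simpl. rewrite <- IH. unfold walk_mean. rewrite <- plus_sum. apply sum_eq. intros; ring.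
Qed.

End WalkMean.

Definition walk_moment (a : R) (n e : nat) : R := walk_mean a n (fun x => x ^ e).

(* [1] for even [r], [a] for odd [r]. *)
Definition parity_weight (a : R) (r : nat) : R := p_up a + p_down a * (-1) ^ r.

Lemma parity_weight_0 a : parity_weight a 0 = 1.
Proof. unfold parity_weight, p_up, p_down. simpl. field. Qed.

Lemma parity_weight_1 a : parity_weight a 1 = a.
Proof. unfold parity_weight, p_up, p_down. simpl. field. Qed.

Lemma parity_weight_bounds a r : 1 < a -> 0 <= parity_weight a r <= a ^ r.
Proof.
  intros Ha. destruct r as [|r].
  - rewrite parity_weight_0. simpl. lra.
  - assert (a <= a ^ S r) by (rewrite <- (pow_1 a) at 1; apply Rle_pow; lia || lra).
    unfold parity_weight, p_up, p_down.
    assert (Hx : Rabs ((-1) ^ S r) = 1) by apply pow_1_abs.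
    destruct (Rle_lt_dec 0 ((-1) ^ S r));
      [rewrite Rabs_pos_eq in Hx | rewrite Rabs_left in Hx]; auto; nra.
Qed.

Section WalkMoments.

Variable a : R.
Hypothesis Ha : 1 < a.

Lemma walk_moment_0 e : walk_moment a 0 e = 0 ^ e.
Proof. apply walk_mean_0. Qed.

Lemma walk_moment_succ n e :
  walk_moment a (S n) e =
  sum_f_R0 (fun i => Binomial.C e i * walk_moment a n i * parity_weight a (e - i)) e.
Proof.
  unfold walk_moment. rewrite walk_mean_succ.
  rewrite (walk_mean_ext _ _ _
    (fun x => sum_f_R0 (fun i => (Binomial.C e i * parity_weight a (e - i)) * x ^ i) e)).
  - rewrite walk_mean_sum. apply sum_eq. intros i _. rewrite walk_mean_scal. ring.
  - intros x. replace (x - 1) with (x + -1) by ring.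
    rewrite !binomial, !scal_sum, <- plus_sum. apply sum_eq.
    intros i _. unfold parity_weight. rewrite pow1. ring.
Qed.

Lemma walk_moment_term_nonneg n e i :
  (forall i, 0 <= walk_moment a n i) ->
  0 <= Binomial.C e i * walk_moment a n i * parity_weight a (e - i).
Proof.
  intros Hn. apply Rmult_le_pos; [apply Rmult_le_pos|]; auto using binomial_C_nonneg.
  apply parity_weight_bounds, Ha.
Qed.

Lemma walk_moment_nonneg n e : 0 <= walk_moment a n e.
Proof.
  revert e. induction n as [|n IH]; intros e.
  - rewrite walk_moment_0. apply pow_le. lra.
  - rewrite walk_moment_succ. apply cond_pos_sum. intros i.
    apply walk_moment_term_nonneg, IH.
Qed.

Lemma walk_moment_le n e : walk_moment a n e <= a ^ e * INR n ^ e.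
Proof.
  revert e. induction n as [|n IH]; intros e.
  - rewrite walk_moment_0. destruct e; simpl; lra.
  - rewrite walk_moment_succ, <- Rpow_mult_distr, S_INR, Rmult_plus_distr_l, Rmult_1_r, binomial.
    apply sum_Rle. intros i Hi.
    rewrite Rpow_mult_distr.
    apply Rmult_le_compat.
    + apply Rmult_le_pos; [apply binomial_C_nonneg | apply walk_moment_nonneg].
    + apply parity_weight_bounds, Ha.
    + apply Rmult_le_compat_l; [apply binomial_C_nonneg | apply IH].
    + apply parity_weight_bounds, Ha.
Qed.

Lemma walk_moment_succ_ge n e :
  walk_moment a n (S e) + INR (S e) * a * walk_moment a n e <= walk_moment a (S n) (S e).
Proof.
  rewrite walk_moment_succ, tech5, Nat.sub_diag, parity_weight_0, C_n_n.
  set (t := fun i => Binomial.C (S e) i * walk_moment a n i * parity_weight a (S e - i)).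
  assert (Ht : forall i, 0 <= t i) by (intros i; apply walk_moment_term_nonneg, walk_moment_nonneg).
  assert (Hlast : t e <= sum_f_R0 t e).
  { destruct e as [|e]; simpl; [lra|].
    assert (0 <= sum_f_R0 t e) by (apply cond_pos_sum; auto). lra. }
  unfold t at 1 in Hlast. rewrite binomial_C_succ_pred in Hlast.
  replace (S e - e)%nat with 1%nat in Hlast by lia. rewrite parity_weight_1 in Hlast.
  lra.
Qed.

Lemma pow_succ_sub_le m e : 0 <= m -> (m + 1) ^ S e - m ^ S e <= INR (S e) * (m + 1) ^ e.
Proof.
  intros Hm. induction e as [|e IH]; [simpl; lra|].
  assert (m ^ S e <= (m + 1) ^ S e) by (apply pow_incr; lra).
  rewrite S_INR. simpl pow in *. nra.
Qed.

Lemma walk_moment_ge n e : (e <= n)%nat -> a ^ e * (INR n - INR e) ^ e <= walk_moment a n e.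
Proof.
  revert e. induction n as [|n IH]; intros e He.
  - replace e with 0%nat by lia. rewrite walk_moment_0. simpl. lra.
  - destruct e as [|e].
    + rewrite walk_moment_succ. simpl. rewrite C_n_0, parity_weight_0.
      specialize (IH 0%nat (Nat.le_0_l n)). simpl in IH. lra.
    + destruct (Nat.eq_dec e n) as [->|Hne].
      { rewrite Rminus_diag, pow_i, Rmult_0_r by lia. apply walk_moment_nonneg. }
      set (m := INR n - INR (S e)).
      assert (Hm : 0 <= m) by (apply Rge_le, Rge_minus, Rle_ge, le_INR; lia).
      assert (IH1 := IH e ltac:(lia)). assert (IH2 := IH (S e) ltac:(lia)).
      replace (INR n - INR e) with (m + 1) in IH1 by (unfold m; rewrite S_INR; ring).
      replace (INR (S n) - INR (S e)) with (m + 1) by (unfold m; rewrite !S_INR; ring).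
      fold m in IH2.
      assert (Hd := pow_succ_sub_le m e Hm).
      assert (Hstep := walk_moment_succ_ge n e).
      assert (Hd' : a ^ S e * ((m + 1) ^ S e - m ^ S e) <= INR (S e) * a * (a ^ e * (m + 1) ^ e)).
      { replace (INR (S e) * a * (a ^ e * (m + 1) ^ e))
          with (a ^ S e * (INR (S e) * (m + 1) ^ e)) by (simpl; ring).
        apply Rmult_le_compat_l; [apply pow_le; lra | exact Hd]. }
      assert (IH1' : INR (S e) * a * (a ^ e * (m + 1) ^ e) <= INR (S e) * a * walk_moment a n e).
      { apply Rmult_le_compat_l; [apply Rmult_le_pos; [apply pos_INR | lra] | exact IH1]. }
      lra.
Qed.

End WalkMoments.

Lemma is_lim_seq_partial_sums (w : nat -> R) (l : R) :
  is_series w l -> is_lim_seq (fun N => sum_f_R0 w N) l.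
Proof. intros H. eapply is_lim_seq_ext; [intros; apply sum_n_Reals | exact H]. Qed.

Lemma Rabs_series_le (w W : nat -> R) (l L : R) :
  (forall m, Rabs (w m) <= W m) -> is_series w l -> is_series W L -> Rabs l <= L.
Proof.
  intros Hle Hw HW.
  assert (Habs : ex_series (fun m => Rabs (w m))).
  { apply (@ex_series_le R_AbsRing R_CompleteNormedModule _ W); [|exists L; exact HW].
    intros m. change norm with Rabs. simpl. rewrite Rabs_Rabsolu. apply Hle. }
  rewrite <- (is_series_unique _ _ Hw), <- (is_series_unique _ _ HW).
  eapply Rle_trans; [apply Series_Rabs, Habs|].
  apply Series_le; [|exists L; exact HW].
  intros m. split; [apply Rabs_pos | apply Hle].
Qed.

Lemma Rabs_series_tail_le (w W : nat -> R) (l L : R) (M : nat) :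
  (forall m, Rabs (w m) <= W m) -> is_series w l -> is_series W L ->
  Rabs (l - sum_f_R0 w M) <= L - sum_f_R0 W M.
Proof.
  intros Hle Hw HW. rewrite <- !sum_n_Reals.
  assert (Htail : forall (u : nat -> R) (lu : R), is_series u lu ->
            is_series (fun k => u (S M + k)%nat) (lu - sum_n u M)).
  { intros u lu Hu. apply is_series_incr_n; [lia|]. simpl pred.
    match goal with |- is_series _ ?x => replace x with lu end; [exact Hu|].
    change (lu = lu - sum_n u M + sum_n u M). ring. }
  apply (Rabs_series_le (fun k => w (S M + k)%nat) (fun k => W (S M + k)%nat)); auto.
Qed.

Lemma is_lim_seq_sum_f_R0 (u : nat -> nat -> R) (v : nat -> R) (M : nat) :
  (forall m, is_lim_seq (u m) (v m)) ->
  is_lim_seq (fun n => sum_f_R0 (fun m => u m n) M) (sum_f_R0 v M).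
Proof.
  intros H. induction M as [|M IH]; simpl; auto.
  apply is_lim_seq_plus'; auto.
Qed.

Lemma is_lim_seq_series_dominated (u : nat -> nat -> R) (v U Su : nat -> R) (SU V : R) :
  (forall m n, Rabs (u m n) <= U m) -> is_series U SU ->
  (forall m, is_lim_seq (u m) (v m)) ->
  (forall n, is_series (fun m => u m n) (Su n)) -> is_series v V ->
  is_lim_seq Su V.
Proof.
  intros HU HSU Hlim HS HV.
  assert (Hv : forall m, Rabs (v m) <= U m).
  { intros m. exact (is_lim_seq_le _ _ _ _ (fun n => HU m n)
      (is_lim_seq_abs _ _ (Hlim m)) (is_lim_seq_const (U m))). }
  apply is_lim_seq_spec. intros eps.
  assert (He3 : 0 < eps / 3) by (destruct eps; simpl; lra).
  destruct (proj2 (is_lim_seq_spec _ _) (is_lim_seq_partial_sums _ _ HSU) (mkposreal _ He3))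
    as [M HM].
  assert (HtailU : SU - sum_f_R0 U M < eps / 3).
  { specialize (HM M (le_n M)). simpl in HM. rewrite Rabs_minus_sym in HM.
    apply Rabs_def2 in HM. lra. }
  destruct (proj2 (is_lim_seq_spec _ _) (is_lim_seq_sum_f_R0 u v M Hlim) (mkposreal _ He3))
    as [N HN].
  exists N. intros n Hn. specialize (HN n Hn). simpl in HN.
  assert (Htail_n :=
    Rabs_series_tail_le (fun m => u m n) U (Su n) SU M (fun m => HU m n) (HS n) HSU).
  assert (Htail_v := Rabs_series_tail_le v U V SU M Hv HV HSU).
  replace (Su n - V) with ((Su n - sum_f_R0 (fun m => u m n) M) +
     (sum_f_R0 (fun m => u m n) M - sum_f_R0 v M) - (V - sum_f_R0 v M)) by ring.
  eapply Rle_lt_trans; [apply Rabs_triang|]. rewrite Rabs_Ropp.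
  eapply Rle_lt_trans; [apply Rplus_le_compat_r, Rabs_triang|]. lra.
Qed.

(* For [n = 0] the only node is [1 - 2*0/0 = 1], Rocq's division by zero giving [0]. *)
Definition binom_mean (a : R) (n : nat) (f : R -> R) : R :=
  sum_f_R0 (fun j => Ccoef n j a * f (1 - 2 * INR j / INR n)) n.

Definition bounded_cvg (a : R) (f : R -> R) (B : R) : Prop :=
  (forall n, Rabs (binom_mean a n f) <= B) /\ is_lim_seq (fun n => binom_mean a n f) (f a).

Lemma is_series_sum_f_R0 (g : nat -> nat -> R) (G : nat -> R) (N : nat) :
  (forall j, is_series (g j) (G j)) ->
  is_series (fun m => sum_f_R0 (fun j => g j m) N) (sum_f_R0 G N).
Proof.
  intros H. induction N as [|N IH]; [apply H|].
  exact (is_series_plus _ _ _ _ IH (H (S N))).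
Qed.

Section BinomMean.

Variable a : R.

Lemma binom_mean_ext n f g : (forall x, f x = g x) -> binom_mean a n f = binom_mean a n g.
Proof. intros H. apply sum_eq. intros; rewrite H; reflexivity. Qed.

Lemma binom_mean_0 f : binom_mean a 0 f = f 1.
Proof.
  unfold binom_mean, Ccoef. simpl. rewrite C_n_0.
  replace (1 - 2 * 0 / 0) with 1 by (unfold Rdiv; rewrite Rmult_0_r, Rmult_0_l; ring). ring.
Qed.

Lemma binom_mean_scal n c f : binom_mean a n (fun s => c * f s) = c * binom_mean a n f.
Proof. unfold binom_mean. rewrite scal_sum. apply sum_eq. intros; ring. Qed.

Lemma binom_mean_plus n f g :
  binom_mean a n (fun s => f s + g s) = binom_mean a n f + binom_mean a n g.
Proof. unfold binom_mean. rewrite <- plus_sum. apply sum_eq. intros; ring. Qed.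

Lemma binom_mean_pow n e : (1 <= n)%nat ->
  binom_mean a n (fun s => s ^ e) = walk_moment a n e / INR n ^ e.
Proof.
  intros Hn. assert (Hn' : INR n <> 0) by (apply not_0_INR; lia).
  unfold binom_mean, walk_moment, walk_mean, Rdiv. rewrite Rmult_comm, scal_sum.
  apply sum_eq. intros j _. unfold Ccoef, p_up, p_down. cbv beta.
  replace (1 - 2 * INR j * / INR n) with ((INR n - 2 * INR j) * / INR n) by (field; auto).
  rewrite Rpow_mult_distr, pow_inv. ring.
Qed.

Lemma is_series_binom_mean n (fm : nat -> R -> R) f :
  (forall s, is_series (fun m => fm m s) (f s)) ->
  is_series (fun m => binom_mean a n (fm m)) (binom_mean a n f).
Proof.
  intros H. unfold binom_mean.
  apply (is_series_sum_f_R0 (fun j m => Ccoef n j a * fm m (1 - 2 * INR j / INR n))).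
  intros j. apply (is_series_scal (Ccoef n j a) (fun m => fm m _)), H.
Qed.

End BinomMean.

Lemma is_lim_seq_inv_INR : is_lim_seq (fun n => / INR n) 0.
Proof.
  replace (Finite 0) with (Rbar_inv p_infty) by reflexivity.
  apply is_lim_seq_inv; [apply is_lim_seq_INR | discriminate].
Qed.

Section BoundedCvg.

Variable a : R.

Lemma bounded_cvg_ext f g B : (forall x, f x = g x) -> bounded_cvg a f B -> bounded_cvg a g B.
Proof.
  intros H [Hb Hl]. split.
  - intros n. rewrite <- (binom_mean_ext _ _ _ _ H). auto.
  - rewrite <- H. eapply is_lim_seq_ext; [|exact Hl]. intros n; apply binom_mean_ext, H.
Qed.

Lemma bounded_cvg_scal c f B : bounded_cvg a f B -> bounded_cvg a (fun s => c * f s) (Rabs c * B).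
Proof.
  intros [Hb Hl]. split.
  - intros n. rewrite binom_mean_scal, Rabs_mult.
    apply Rmult_le_compat_l; [apply Rabs_pos | auto].
  - eapply is_lim_seq_ext; [intros n; symmetry; apply binom_mean_scal|].
    apply is_lim_seq_mult'; [apply is_lim_seq_const | auto].
Qed.

Lemma bounded_cvg_plus f g B1 B2 :
  bounded_cvg a f B1 -> bounded_cvg a g B2 -> bounded_cvg a (fun s => f s + g s) (B1 + B2).
Proof.
  intros [Hb1 Hl1] [Hb2 Hl2]. split.
  - intros n. rewrite binom_mean_plus. eapply Rle_trans; [apply Rabs_triang|].
    apply Rplus_le_compat; auto.
  - eapply is_lim_seq_ext; [intros n; symmetry; apply binom_mean_plus|].
    apply is_lim_seq_plus'; auto.
Qed.

Lemma bounded_cvg_pow e : 1 < a -> bounded_cvg a (fun s => s ^ e) (a ^ e).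
Proof.
  intros Ha.
  assert (Hbnd : forall n, (1 <= n)%nat -> 0 <= binom_mean a n (fun s => s ^ e) <= a ^ e).
  { intros n Hn. rewrite binom_mean_pow by auto.
    assert (0 < INR n ^ e) by (apply pow_lt, lt_0_INR; lia).
    split; [apply Rdiv_le_0_compat; auto using walk_moment_nonneg|].
    apply Rle_div_l; auto. apply walk_moment_le, Ha. }
  split.
  - intros [|n].
    + rewrite binom_mean_0, pow1, Rabs_R1. apply pow_R1_Rle. lra.
    + rewrite Rabs_pos_eq; apply Hbnd; lia.
  - apply is_lim_seq_le_le_loc with (u := fun n => a ^ e * (1 - INR e * / INR n) ^ e)
      (w := fun n => a ^ e); [| |apply is_lim_seq_const].
    + exists (S e). intros n Hn. split; [|apply Hbnd; lia].
      assert (Hn' : 0 < INR n) by (apply lt_0_INR; lia).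
      rewrite binom_mean_pow by lia.
      replace (1 - INR e * / INR n) with ((INR n - INR e) * / INR n) by (field; lra).
      rewrite Rpow_mult_distr, pow_inv, <- Rmult_assoc.
      apply Rmult_le_compat_r; [left; apply Rinv_0_lt_compat, pow_lt; auto|].
      apply walk_moment_ge; lia || lra.
    + assert (L := is_lim_seq_continuous (fun x => a ^ e * (1 - INR e * x) ^ e) _ 0
                      ltac:(apply derivable_continuous_pt; reg) is_lim_seq_inv_INR).
      cbv beta in L. rewrite Rmult_0_r, Rminus_0_r, pow1, Rmult_1_r in L. exact L.
Qed.

Lemma bounded_cvg_series (fm : nat -> R -> R) (Bm : nat -> R) (B : R) f :
  (forall m, bounded_cvg a (fm m) (Bm m)) -> is_series Bm B ->
  (forall s, is_series (fun m => fm m s) (f s)) -> bounded_cvg a f B.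
Proof.
  intros Hfm HB Hf. split.
  - intros n. apply (Rabs_series_le (fun m => binom_mean a n (fm m)) Bm); auto.
    + intros m. apply Hfm.
    + apply is_series_binom_mean, Hf.
  - apply (is_lim_seq_series_dominated (fun m n => binom_mean a n (fm m)) (fun m => fm m a) Bm
             (fun n => binom_mean a n f) B); auto.
    + intros m n. apply Hfm.
    + intros m. apply Hfm.
    + intros n. apply is_series_binom_mean, Hf.
Qed.

End BoundedCvg.

(* The bound [a^e K] on the [e]-th moment of [h] is what allows multiplication of [h] by
   entire power series, see [admissible_mul_series]. *)
Definition admissible (a : R) (h : R -> R) : Prop :=
  exists K, forall e, bounded_cvg a (fun s => s ^ e * h s) (a ^ e * K).

Section Admissible.

Variable a : R.

Lemma admissible_cvg h : admissible a h -> is_lim_seq (fun n => binom_mean a n h) (h a).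
Proof.
  intros [K HK]. destruct (HK 0%nat) as [_ Hl].
  replace (h a) with (a ^ 0 * h a) by ring.
  eapply is_lim_seq_ext; [|exact Hl]. intros n. apply binom_mean_ext. intros s. ring.
Qed.

Lemma admissible_ext h g : (forall s, h s = g s) -> admissible a h -> admissible a g.
Proof.
  intros H [K HK]. exists K. intros e.
  apply (bounded_cvg_ext _ (fun s => s ^ e * h s)); [intros s; rewrite H; auto | apply HK].
Qed.

Lemma admissible_one : 1 < a -> admissible a (fun _ => 1).
Proof.
  intros Ha. exists 1. intros e. rewrite Rmult_1_r.
  apply (bounded_cvg_ext _ (fun s => s ^ e)); [intros; ring | apply bounded_cvg_pow, Ha].
Qed.

Lemma admissible_scal c h : admissible a h -> admissible a (fun s => c * h s).
Proof.
  intros [K HK]. exists (Rabs c * K). intros e.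
  replace (a ^ e * (Rabs c * K)) with (Rabs c * (a ^ e * K)) by ring.
  apply (bounded_cvg_ext _ (fun s => c * (s ^ e * h s))); [intros; ring|].
  apply bounded_cvg_scal, HK.
Qed.

Lemma admissible_plus h g : admissible a h -> admissible a g -> admissible a (fun s => h s + g s).
Proof.
  intros [K HK] [K' HK']. exists (K + K'). intros e.
  rewrite Rmult_plus_distr_l.
  apply (bounded_cvg_ext _ (fun s => s ^ e * h s + s ^ e * g s)); [intros; ring|].
  apply bounded_cvg_plus; auto.
Qed.

Lemma admissible_mul_id h : admissible a h -> admissible a (fun s => s * h s).
Proof.
  intros [K HK]. exists (a * K). intros e.
  replace (a ^ e * (a * K)) with (a ^ S e * K) by (simpl; ring).
  apply (bounded_cvg_ext _ (fun s => s ^ S e * h s)); [intros; simpl; ring | apply HK].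
Qed.

Lemma admissible_mul_series h (c : nat -> R) (lam : R) (L : nat) (F : R -> R) :
  admissible a h ->
  (forall s, is_series (fun m => c m * (lam * s ^ L) ^ m) (F s)) ->
  ex_series (fun m => Rabs (c m) * (Rabs lam * a ^ L) ^ m) ->
  admissible a (fun s => F s * h s).
Proof.
  intros [K HK] HF [l Hl].
  exists (K * l). intros e.
  replace (a ^ e * (K * l)) with (scal (a ^ e * K) l)
    by (unfold scal; simpl; unfold mult; simpl; ring).
  apply (bounded_cvg_series a (fun m s => (c m * lam ^ m) * (s ^ (e + L * m) * h s))
           (fun m => Rabs (c m * lam ^ m) * (a ^ (e + L * m) * K))).
  - intros m. apply bounded_cvg_scal, HK.
  - eapply is_series_ext; [|apply (is_series_scal (a ^ e * K) _ _ Hl)].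
    intros m. unfold scal; simpl; unfold mult; simpl.
    rewrite Rabs_mult, <- RPow_abs, pow_add, pow_mult, Rpow_mult_distr. ring.
  - intros s. replace (s ^ e * (F s * h s)) with (scal (s ^ e * h s) (F s))
      by (unfold scal; simpl; unfold mult; simpl; ring).
    eapply is_series_ext; [|apply (is_series_scal (s ^ e * h s) _ _ (HF s))].
    intros m. unfold scal; simpl; unfold mult; simpl.
    rewrite pow_add, pow_mult, Rpow_mult_distr. ring.
Qed.

End Admissible.

Lemma is_series_exp x : is_series (fun m => / INR (fact m) * x ^ m) (exp x).
Proof. apply is_series_Reals. unfold exp. destruct (exist_exp x) as [l Hl]. exact Hl. Qed.

Lemma ex_series_exp_abs r : ex_series (fun m => Rabs (/ INR (fact m)) * r ^ m).
Proof.
  exists (exp r). eapply is_series_ext; [|apply is_series_exp]. intros m.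
  rewrite Rabs_pos_eq; auto. left; apply Rinv_0_lt_compat, INR_fact_lt_0.
Qed.

Lemma ex_series_alt_inv_fact (g : nat -> nat) r : 0 <= r -> (forall i, (i <= g i)%nat) ->
  ex_series (fun i => Rabs ((-1) ^ i / INR (fact (g i))) * r ^ i).
Proof.
  intros Hr Hg.
  apply (@ex_series_le R_AbsRing R_CompleteNormedModule _ (fun m => Rabs (/ INR (fact m)) * r ^ m));
    [intros i | apply ex_series_exp_abs]. change norm with Rabs. simpl.
  assert (Hpos : forall m, 0 < / INR (fact m)) by (intros; apply Rinv_0_lt_compat, INR_fact_lt_0).
  rewrite Rabs_pos_eq by (apply Rmult_le_pos; [apply Rabs_pos | apply pow_le; auto]).
  unfold Rdiv. rewrite Rabs_mult, pow_1_abs, Rmult_1_l, !Rabs_pos_eq by (left; apply Hpos).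
  apply Rmult_le_compat_r; [apply pow_le; auto|].
  apply Rinv_le_contravar; [apply INR_fact_lt_0 | apply le_INR, fact_le, Hg].
Qed.

Section AdmissibleElementary.

Variable a : R.
Hypothesis Ha : 1 < a.

Lemma admissible_mul_exp h lam L :
  admissible a h -> admissible a (fun s => exp (lam * s ^ L) * h s).
Proof.
  intros H. apply (admissible_mul_series a h (fun m => / INR (fact m)) lam L); auto.
  - intros s. apply is_series_exp.
  - apply ex_series_exp_abs.
Qed.

Lemma admissible_mul_cos h D : admissible a h -> admissible a (fun s => cos (D * s) * h s).
Proof.
  intros H. apply (admissible_mul_series a h cos_n (D * D) 2); auto.
  - intros s. apply is_series_Reals. unfold cos. destruct (exist_cos (Rsqr (D * s))) as [l Hl].
    replace (D * D * s ^ 2) with (Rsqr (D * s)) by (unfold Rsqr; ring). exact Hl.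
  - apply ex_series_alt_inv_fact; [|intros; lia].
    apply Rmult_le_pos; [apply Rabs_pos | apply pow_le; lra].
Qed.

(* In the Reals library [sin x] is [x] times the value of a power series in [x^2]. *)
Lemma admissible_mul_sin h D : admissible a h -> admissible a (fun s => sin (D * s) * h s).
Proof.
  intros H.
  set (Sf := fun s => proj1_sig (exist_sin (Rsqr (D * s)))).
  assert (HS : admissible a (fun s => Sf s * h s)).
  { apply (admissible_mul_series a h sin_n (D * D) 2); auto.
    - intros s. apply is_series_Reals. unfold Sf. destruct (exist_sin (Rsqr (D * s))) as [l Hl].
      replace (D * D * s ^ 2) with (Rsqr (D * s)) by (unfold Rsqr; ring). exact Hl.
    - apply ex_series_alt_inv_fact; [|intros; lia].
      apply Rmult_le_pos; [apply Rabs_pos | apply pow_le; lra]. }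
  apply (admissible_ext a (fun s => D * (s * (Sf s * h s)))).
  - intros s. unfold sin, Sf. destruct (exist_sin (Rsqr (D * s))). simpl. ring.
  - apply admissible_scal, admissible_mul_id, HS.
Qed.

End AdmissibleElementary.

Definition admissibleC (a : R) (h : R -> C) : Prop :=
  admissible a (fun s => fst (h s)) /\ admissible a (fun s => snd (h s)).

Lemma sum_n_Cmult_RtoC (c : nat -> R) (w : nat -> C) (n : nat) :
  sum_n (fun j => Cmult (RtoC (c j)) (w j)) n =
  (sum_f_R0 (fun j => c j * fst (w j)) n, sum_f_R0 (fun j => c j * snd (w j)) n).
Proof.
  induction n as [|n IH].
  - rewrite sum_O. unfold Cmult, RtoC. simpl. f_equal; ring.
  - rewrite sum_Sn, IH. unfold plus. simpl. unfold Cplus, Cmult, RtoC. simpl. f_equal; ring.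
Qed.

Section AdmissibleC.

Variable a : R.

Lemma admissibleC_ext h g : (forall s, h s = g s) -> admissibleC a h -> admissibleC a g.
Proof.
  intros H [H1 H2].
  split; [apply (admissible_ext a (fun s => fst (h s)))
         | apply (admissible_ext a (fun s => snd (h s)))]; auto; intros s; rewrite H; reflexivity.
Qed.

Lemma admissibleC_mul_affine (u v : C) h :
  admissibleC a h -> admissibleC a (fun s => Cmult (Cplus u (Cmult (RtoC s) v)) (h s)).
Proof.
  destruct u as [u1 u2], v as [v1 v2]. intros [H1 H2]. split.
  - apply (admissible_ext a (fun s => (u1 * fst (h s) + - u2 * snd (h s))
                                   + s * (v1 * fst (h s) + - v2 * snd (h s)))).
    + intros s. simpl. ring.
    + apply admissible_plus; [|apply admissible_mul_id];
        apply admissible_plus; apply admissible_scal; auto.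
  - apply (admissible_ext a (fun s => (u1 * snd (h s) + u2 * fst (h s))
                                   + s * (v1 * snd (h s) + v2 * fst (h s)))).
    + intros s. simpl. ring.
    + apply admissible_plus; [|apply admissible_mul_id];
        apply admissible_plus; apply admissible_scal; auto.
Qed.

Lemma admissibleC_scal (u : C) h : admissibleC a h -> admissibleC a (fun s => Cmult u (h s)).
Proof.
  intros H. apply (admissibleC_ext (fun s => Cmult (Cplus u (Cmult (RtoC s) 0)) (h s))).
  - intros s. rewrite Cmult_0_r, Cplus_0_r. reflexivity.
  - apply admissibleC_mul_affine, H.
Qed.

Lemma admissibleC_mul_affine_pow (u v : C) h k :
  admissibleC a h ->
  admissibleC a (fun s => Cmult (pow_n (Cplus u (Cmult (RtoC s) v)) k) (h s)).
Proof.
  intros H. induction k as [|k IH].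
  - apply (admissibleC_ext h); [intros s; simpl; rewrite Cmult_1_l; auto | exact H].
  - apply (admissibleC_ext (fun s => Cmult (Cplus u (Cmult (RtoC s) v))
                                 (Cmult (pow_n (Cplus u (Cmult (RtoC s) v)) k) (h s)))).
    + intros s. simpl. rewrite Cmult_assoc. reflexivity.
    + apply admissibleC_mul_affine, IH.
Qed.

Lemma filterlim_binom_mean_C (g : R -> C) : admissibleC a g ->
  filterlim (fun n => sum_n (fun j => Cmult (RtoC (Ccoef n j a)) (g (1 - 2 * INR j / INR n))) n)
    eventually (locally (g a)).
Proof.
  intros [H1 H2].
  apply admissible_cvg, is_lim_seq_spec in H1, H2.
  apply filterlim_locally. intros eps.
  destruct (H1 eps) as [N1 HN1], (H2 eps) as [N2 HN2].
  exists (max N1 N2). intros n Hn.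
  rewrite sum_n_Cmult_RtoC. split; [apply HN1 | apply HN2]; lia.
Qed.

End AdmissibleC.

(* [bj n j = weyl_point (1 - 2j/n)] and [bval a = weyl_point a]. *)
Definition weyl_point (s : R) : C := (0, - s / sqrt 2).

Definition weyl_exponent (c z : C) : C :=
  Cminus (Cmult z (Cconj c)) (RtoC (Cmod c ^ 2 / 2)).

(* Stated in the shape [exp (lam * s ^ L) * h s] consumed by [admissible_mul_exp]. *)
Lemma Cexp_weyl_exponent z s :
  Cexp (weyl_exponent (weyl_point s) z) =
  (exp (- snd z / sqrt 2 * s ^ 1) * (exp (- / 4 * s ^ 2) * (cos (fst z / sqrt 2 * s) * 1)),
   exp (- snd z / sqrt 2 * s ^ 1) * (exp (- / 4 * s ^ 2) * (sin (fst z / sqrt 2 * s) * 1))).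
Proof.
  assert (Hs := sqrt2_neq_0).
  destruct z as [x y].
  assert (Hre : Re (weyl_exponent (weyl_point s) (x, y)) = - y / sqrt 2 * s ^ 1 + - / 4 * s ^ 2).
  { unfold weyl_exponent, weyl_point, Re, Cminus, Cplus, Copp, Cmult, Cconj, RtoC, Cmod. simpl.
    rewrite !Rmult_0_l, Rplus_0_l, !Rmult_1_r, sqrt_sqrt by nra.
    replace (- s / sqrt 2 * (- s / sqrt 2)) with (s * s / (sqrt 2 * sqrt 2)) by (field; auto).
    rewrite sqrt_sqrt by lra. field. auto. }
  assert (Him : Im (weyl_exponent (weyl_point s) (x, y)) = x / sqrt 2 * s).
  { unfold weyl_exponent, weyl_point, Im, Cminus, Cplus, Copp, Cmult, Cconj, RtoC. simpl.
    field. auto. }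
  unfold Cexp. rewrite Hre, Him, exp_plus. simpl. f_equal; ring.
Qed.

Lemma admissibleC_Cexp_weyl_exponent a z :
  1 < a -> admissibleC a (fun s => Cexp (weyl_exponent (weyl_point s) z)).
Proof.
  intros Ha.
  eapply admissibleC_ext; [intros s; symmetry; apply Cexp_weyl_exponent|].
  split; cbn [fst snd]; apply admissible_mul_exp, admissible_mul_exp;
    [apply admissible_mul_cos | apply admissible_mul_sin]; auto using admissible_one.
Qed.

Lemma Weyl_weyl_point_e_k k z s :
  Weyl (weyl_point s) (e_k k) z =
  Cmult (Cinv (RtoC (sqrt (INR (fact k)))))
    (Cmult (pow_n (Cplus z (Cmult (RtoC s) (0, / sqrt 2))) k)
       (Cexp (weyl_exponent (weyl_point s) z))).
Proof.
  assert (E : Cminus z (weyl_point s) = Cplus z (Cmult (RtoC s) (0, / sqrt 2))).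
  { destruct z as [x y]. unfold Cminus, Cplus, Copp, Cmult, RtoC, weyl_point. simpl.
    f_equal; field; apply sqrt2_neq_0. }
  unfold Weyl, e_k, Cdiv. fold (weyl_exponent (weyl_point s) z). rewrite E.
  rewrite (Cmult_comm (pow_n _ k)), Cmult_assoc. reflexivity.
Qed.

Lemma admissibleC_Weyl_e_k a k z :
  1 < a -> admissibleC a (fun s => Weyl (weyl_point s) (e_k k) z).
Proof.
  intros Ha. apply (admissibleC_ext a _ _ (fun s => eq_sym (Weyl_weyl_point_e_k k z s))).
  apply admissibleC_scal, admissibleC_mul_affine_pow, admissibleC_Cexp_weyl_exponent, Ha.
Qed.

Theorem theorem3p24 (a : R) (k : nat) (z : Complex.C) :
  1 < a ->
  filterlim
    (fun n : nat =>
       sum_n (fun j : nat => Cmult (RtoC (Ccoef n j a)) (Weyl (bj n j) (e_k k) z)) n)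
    eventually
    (locally (Weyl (bval a) (e_k k) z)).
Proof.
  intros Ha.
  exact (filterlim_binom_mean_C a _ (admissibleC_Weyl_e_k a k z Ha)).
Qed.
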